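(* Almost surely the following holds. Fix $C>1$ and $z,w\in\mathbb C$, let $\varepsilon\in(0,1/(100C))$, and let $\mathbf x,\mathbf y\in[0,1]^n$ satisfy $\max_{i\in\{1,\dots,n\}}|x_i-y_i|>8e\xi^{-1}C\varepsilon$. If $E^\varepsilon_{\mathbf x}(z,w)\cap G(C)$ occurs, then $E^\varepsilon_{\mathbf y}(z,w)$ does not occur.
   Context: Fix $\gamma\in(0,2)$; let $d_\gamma>2$ be the LQG dimension exponent and $\xi=\gamma/d_\gamma$. Let $h$ be a whole-plane Gaussian free field normalized so that its average over $\partial\mathbb D$ is zero. For $f$ a whole-plane GFF plus a continuous function, $D_f$ denotes the $\gamma$-LQG metric of $f$ (a metric on $\mathbb C$ inducing the Euclidean topology, a length space). Weyl scaling: a.s. for every continuous $g:\mathbb C\to\mathbb R$, $D_{h+g}(z,w)=\inf_P\int_0^{\mathrm{len}(P;D_h)}e^{\xi g(P(t))}\,dt$, the infimum over continuous paths from $z$ to $w$ parametrized by $D_h$-length. A $D_f$-geodesic from $z$ to $w$ is a path $P:[0,D_f(z,w)]\to\mathbb C$ with $P(0)=z$, $P(D_f(z,w))=w$, $D_f(P(s),P(t))=|t-s|$; $\mathcal B_\varepsilon(z;D_f)$ is the open $D_f$-ball. Fix $n\in\mathbb N$ and bounded open sets $U_i,U_i',V_i$ ($i=1,\dots,n$) with $\overline U_i\subset U_i'$, $\overline{U_i'}\subset V_i$, $\overline V_i\cap\overline V_j=\emptyset$ for $i\ne j$, $V_i\cap\partial\mathbb D=\emptyset$. Let $\phi_i:\mathbb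 C\to[0,1]$ be smooth, identically $1$ on $U_i'$ and $0$ outside $V_i$. For $\mathbf x\in[0,1]^n$ let $h_{\mathbf x}=h+\sum_{i=1}^n x_i\phi_i$. $G(C)$ is the event that $D_h(\partial U_i,\partial U_i')\ge1/C$ for all $i$. $E^\varepsilon_{\mathbf x}(z,w)$ is the event that (1) $\mathcal B_\varepsilon(z;D_{h_{\mathbf x}})$, $\mathcal B_\varepsilon(w;D_{h_{\mathbf x}})$ and $\bigcup_i\overline V_i$ are pairwise disjoint, and (2) there are $D_{h_{\mathbf x}}$-geodesics $P^0,\dots,P^n$, each from a point of $\mathcal B_\varepsilon(z;D_{h_{\mathbf x}})$ to a point of $\mathcal B_\varepsilon(w;D_{h_{\mathbf x}})$, with $P^i\cap U_i\ne\emptyset$ and $P^i\cap\bigcup_{j\ne i}\overline V_j=\emptyset$ for $i\in\{1,\dots,n\}$, and $P^0\cap\bigcup_{j=1}^n\overline V_j=\emptyset$. *)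

From Stdlib Require Import Reals Lra.
From Coquelicot Require Import Coquelicot.
Open Scope R_scope.

(* The complex plane as R x R with the Euclidean distance. *)
Definition pt : Type := (R * R)%type.
Definition edist (p q : pt) : R :=
  sqrt ((fst p - fst q) ^ 2 + (snd p - snd q) ^ 2).
Definition pset := pt -> Prop.

Definition is_open (A : pset) : Prop :=
  forall p, A p -> exists r, 0 < r /\ forall q, edist p q < r -> A q.
Definition bounded (A : pset) : Prop :=
  exists M, forall p, A p -> edist (0, 0) p <= M.
Definition closure (A : pset) : pset :=
  fun p => forall r, 0 < r -> exists q, A q /\ edist p q < r.
Definition boundary (A : pset) : pset :=
  fun p => closure A p /\ closure (fun q => ~ A q) p.
Definition unit_circle : pset := fun p => edist (0, 0) p = 1.

Definition cont2 (f : pt -> R) : Prop :=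
  forall p eps, 0 < eps -> exists d, 0 < d /\
    forall q, edist p q < d -> Rabs (f q - f p) < eps.

(* C^infinity functions on R^2: continuous, with both partial derivatives
   existing everywhere and themselves C^infinity. *)
CoInductive smooth (f : pt -> R) : Prop :=
  smooth_intro : forall fx fy : pt -> R,
    cont2 f ->
    (forall a b, is_derive (fun t => f (t, b)) a (fx (a, b))) ->
    (forall a b, is_derive (fun t => f (a, t)) b (fy (a, b))) ->
    smooth fx -> smooth fy -> smooth f.

Fixpoint rsum (k : nat) (f : nat -> R) : R :=
  match k with O => 0 | S k' => rsum k' f + f k' end.

Definition glb_of (E : R -> Prop) (m : R) : Prop :=
  (forall v, E v -> m <= v) /\ (forall b, (forall v, E v -> b <= v) -> b <= m).

Definition path_cont (P : R -> pt) (a b : R) : Prop :=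
  forall s, a <= s <= b -> forall eps, 0 < eps -> exists d, 0 < d /\
    forall t, a <= t <= b -> Rabs (t - s) < d -> edist (P s) (P t) < eps.

Definition is_partition (a b : R) (t : nat -> R) (k : nat) : Prop :=
  t O = a /\ t k = b /\ forall i, (i < k)%nat -> t i <= t (S i).
Definition partition_sum (D : pt -> pt -> R) (P : R -> pt) (t : nat -> R) (k : nat) : R :=
  rsum k (fun i => D (P (t i)) (P (t (S i)))).
Definition path_length (D : pt -> pt -> R) (P : R -> pt) (a b l : R) : Prop :=
  is_lub (fun v => exists t k, is_partition a b t k /\ v = partition_sum D P t k) l.

Definition is_metric (D : pt -> pt -> R) : Prop :=
  (forall z w, 0 <= D z w) /\ (forall z w, D z w = 0 <-> z = w) /\
  (forall z w, D z w = D w z) /\ (forall z u w, D z w <= D z u + D u w).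

Definition induces_eucl_top (D : pt -> pt -> R) : Prop :=
  (forall z eps, 0 < eps -> exists d, 0 < d /\ forall u, edist z u < d -> D z u < eps) /\
  (forall z eps, 0 < eps -> exists d, 0 < d /\ forall u, D z u < d -> edist z u < eps).

Definition length_space (D : pt -> pt -> R) : Prop :=
  forall z w, glb_of (fun l => exists P, path_cont P 0 1 /\ P 0 = z /\ P 1 = w /\
                                     path_length D P 0 1 l) (D z w).

Definition length_param (D : pt -> pt -> R) (P : R -> pt) (L : R) : Prop :=
  0 <= L /\ path_cont P 0 L /\
  forall s t, 0 <= s -> s <= t -> t <= L -> path_length D P s t (t - s).

(* the set whose infimum is D_{h+g}(z,w) in the Weyl scaling formula *)
Definition weyl_set (D0 : pt -> pt -> R) (xi : R) (g : pt -> R) (z w : pt) : R -> Prop :=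
  fun v => exists P L, length_param D0 P L /\ P 0 = z /\ P L = w /\
                       v = RInt (fun t => exp (xi * g (P t))) 0 L.

Definition zero_fn : pt -> R := fun _ => 0.

(* D g stands for D_{h+g}. The a.s. properties of the LQG metric used:
   D_h is a metric inducing the Euclidean topology and a length space,
   and Weyl scaling holds for every continuous g. *)
Definition LQG_family (xi : R) (D : (pt -> R) -> pt -> pt -> R) : Prop :=
  is_metric (D zero_fn) /\ induces_eucl_top (D zero_fn) /\ length_space (D zero_fn) /\
  forall g, cont2 g -> forall z w, glb_of (weyl_set (D zero_fn) xi g z w) (D g z w).

(* h_x - h = sum_i x_i phi_i  (indices 0..n-1 instead of 1..n) *)
Definition hfield (n : nat) (phi : nat -> pt -> R) (x : nat -> R) : pt -> R :=
  fun u => rsum n (fun i => x i * phi i u).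

Definition in_cube (n : nat) (x : nat -> R) : Prop :=
  forall i, (i < n)%nat -> 0 <= x i <= 1.

Definition ball (D : pt -> pt -> R) (z : pt) (eps : R) : pset := fun u => D z u < eps.

Definition geodesic (D : pt -> pt -> R) (P : R -> pt) (a b : pt) : Prop :=
  P 0 = a /\ P (D a b) = b /\
  forall s t, 0 <= s <= D a b -> 0 <= t <= D a b -> D (P s) (P t) = Rabs (t - s).

Definition union_clV (n : nat) (V : nat -> pset) : pset :=
  fun u => exists j, (j < n)%nat /\ closure (V j) u.

Definition E_event (D : (pt -> R) -> pt -> pt -> R) (n : nat) (U V : nat -> pset)
    (phi : nat -> pt -> R) (x : nat -> R) (eps : R) (z w : pt) : Prop :=
  let Dx := D (hfield n phi x) in
  (forall u, ~ (ball Dx z eps u /\ ball Dx w eps u)) /\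
  (forall u, ~ (ball Dx z eps u /\ union_clV n V u)) /\
  (forall u, ~ (ball Dx w eps u /\ union_clV n V u)) /\
  (exists P a b, ball Dx z eps a /\ ball Dx w eps b /\ geodesic Dx P a b /\
     forall t, 0 <= t <= Dx a b -> ~ union_clV n V (P t)) /\
  (forall i, (i < n)%nat ->
     exists P a b, ball Dx z eps a /\ ball Dx w eps b /\ geodesic Dx P a b /\
       (exists t, 0 <= t <= Dx a b /\ U i (P t)) /\
       forall t, 0 <= t <= Dx a b ->
         forall j, (j < n)%nat -> j <> i -> ~ closure (V j) (P t)).

Definition G_event (D : (pt -> R) -> pt -> pt -> R) (n : nat) (U U' : nat -> pset)
    (C : R) : Prop :=
  forall i, (i < n)%nat -> forall a b, boundary (U i) a -> boundary (U' i) b ->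
    1 / C <= D zero_fn a b.

Definition setup (n : nat) (U U' V : nat -> pset) (phi : nat -> pt -> R) : Prop :=
  (forall i, (i < n)%nat ->
     is_open (U i) /\ is_open (U' i) /\ is_open (V i) /\
     bounded (U i) /\ bounded (U' i) /\ bounded (V i) /\
     (forall p, closure (U i) p -> U' i p) /\
     (forall p, closure (U' i) p -> V i p) /\
     (forall p, ~ (V i p /\ unit_circle p))) /\
  (forall i j, (i < n)%nat -> (j < n)%nat -> i <> j ->
     forall p, ~ (closure (V i) p /\ closure (V j) p)) /\
  (forall i, (i < n)%nat ->
     smooth (phi i) /\ (forall p, 0 <= phi i p <= 1) /\
     (forall p, U' i p -> phi i p = 1) /\ (forall p, ~ V i p -> phi i p = 0)).

(* Idea (orientation y_i > x_i).  E^eps_y provides a D_{h_y}-geodesic Q from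
   a1 to b1 which enters U_i and avoids the other V_j, while E^eps_x provides
   a D_{h_x}-geodesic from a0 to b0 avoiding every V_j; both metrics agree off
   the V_j, and the eps-balls around z, w avoid the V_j.  Chaining the
   triangle inequality through z, a0, b0, w gives
       D_{h_y}(a1,b1) < D_{h_x}(a1,b1) + 8 eps.
   On the other hand Q must cross the annulus cl(U'_i) \ U_i, where phi_i = 1,
   during a time interval of length >= 1/C (event G(C)); there the weight of
   h_x is smaller by a factor ~ exp(-xi (y_i - x_i)), so measuring Q with
   D_{h_x} saves at least (1 - exp(-xi (y_i - x_i))) / C > 8 eps. *)

From Pilot Require Import Defs.
From Stdlib Require Import Reals.
From Coquelicot Require Import Coquelicot.
From Stdlib Require Import Lra Lia Classical FunctionalExtensionality.
Open Scope R_scope.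

Lemma rsum_ext k f g : (forall i, (i < k)%nat -> f i = g i) -> rsum k f = rsum k g.
Proof.
  induction k as [|k IH]; simpl; intros H; [reflexivity|].
  rewrite IH by (intros; apply H; lia); rewrite (H k) by lia; reflexivity.
Qed.

Lemma rsum_app k1 k2 f :
  rsum (k1 + k2) f = rsum k1 f + rsum k2 (fun i => f (k1 + i)%nat).
Proof.
  induction k2 as [|k2 IH]; simpl.
  - rewrite Nat.add_0_r; ring.
  - rewrite Nat.add_succ_r; simpl; rewrite IH; ring.
Qed.

Lemma rsum_succ_l k f : rsum (S k) f = f O + rsum k (fun i => f (S i)).
Proof. induction k as [|k IH]; simpl in *; [ring|]. rewrite IH; ring. Qed.

Lemma rsum_rev k f : rsum k f = rsum k (fun i => f (k - 1 - i)%nat).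
Proof.
  revert f; induction k as [|k IH]; intros f; [reflexivity|].
  rewrite (rsum_succ_l k (fun i => f (S k - 1 - i)%nat)); simpl rsum at 1.
  rewrite (IH f), (rsum_ext k (fun i => f (S k - 1 - S i)%nat) (fun i => f (k - 1 - i)%nat)).
  - replace (S k - 1 - 0)%nat with k by lia; ring.
  - intros; f_equal; lia.
Qed.

Lemma rsum_zero k f : (forall i, (i < k)%nat -> f i = 0) -> rsum k f = 0.
Proof.
  induction k as [|k IH]; simpl; intros H; [reflexivity|].
  rewrite IH by (intros; apply H; lia); rewrite H by lia; ring.
Qed.

Lemma rsum_single k f i :
  (i < k)%nat -> (forall j, (j < k)%nat -> j <> i -> f j = 0) -> rsum k f = f i.
Proof.
  induction k as [|k IH]; simpl; intros Hi H; [lia|].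
  destruct (Nat.eq_dec i k) as [->|Hne].
  - rewrite rsum_zero by (intros; apply H; lia); ring.
  - rewrite IH by (lia || (intros; apply H; lia)); rewrite (H k) by lia; ring.
Qed.

Lemma glb_approx E m : glb_of E m -> forall eta, 0 < eta -> exists v, E v /\ v < m + eta.
Proof.
  intros [_ H] eta Heta; apply NNPP; intros Hn.
  assert (m + eta <= m); [|lra].
  apply H; intros v Hv; apply Rnot_lt_le; intros Hlt; apply Hn; exists v; auto.
Qed.

(* A continuous induction: a path that is locally c-Lipschitz for a
   pseudo-metric on [u,v] moves by at most c (v - u). *)
Lemma lipschitz_of_local (Dp : pt -> pt -> R) (P : R -> pt) u v c :
  (forall x y z, Dp x z <= Dp x y + Dp y z) -> (forall x y, Dp x y = Dp y x) ->
  u <= v -> 0 <= c ->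
  (forall s, u <= s <= v -> exists d, 0 < d /\ forall s', u <= s' <= v ->
      Rabs (s' - s) < d -> Dp (P s) (P s') <= c * Rabs (s' - s)) ->
  Dp (P u) (P v) <= c * (v - u).
Proof.
  intros Htri Hsym Huv Hc Hloc.
  set (E := fun t => u <= t <= v /\ Dp (P u) (P t) <= c * (t - u)).
  assert (HEu : E u).
  { split; [lra|]; destruct (Hloc u ltac:(lra)) as [d [Hd H]].
    specialize (H u ltac:(lra)); rewrite Rminus_eq_0, Rabs_R0 in H.
    rewrite Rminus_eq_0; apply H; lra. }
  assert (Hb : bound E) by (exists v; intros t [Ht _]; lra).
  destruct (completeness E Hb (ex_intro _ u HEu)) as [m [Hm1 Hm2]].
  assert (Hum : u <= m) by (apply Hm1; auto).
  assert (Hmv : m <= v) by (apply Hm2; intros t [Ht _]; lra).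
  destruct (Hloc m ltac:(lra)) as [d [Hd Hl]].
  (* the supremum m is attained ... *)
  assert (HEm : E m).
  { destruct (classic (exists t, E t /\ m - d < t)) as [[t [[Ht1 Ht2] Ht3]]|Hn].
    - assert (t <= m) by (apply Hm1; split; auto).
      split; [lra|].
      specialize (Hl t ltac:(lra)); rewrite Rabs_left1 in Hl by lra.
      assert (Dp (P m) (P t) <= c * - (t - m)) by (apply Hl; lra).
      pose proof (Htri (P u) (P t) (P m)) as Ht4; rewrite (Hsym (P t) (P m)) in Ht4; nra.
    - assert (m <= m - d); [|lra].
      apply Hm2; intros t Ht; apply Rnot_lt_le; intros Hlt; apply Hn; exists t; auto. }
  (* ... and equals v, since otherwise E would contain points beyond m *)
  destruct (Rle_dec v m) as [Hvm|Hvm]; [replace v with m by lra; apply HEm|].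
  set (t := Rmin v (m + d / 2)).
  assert (Ht1 : t <= v) by apply Rmin_l; assert (Ht2 : t <= m + d / 2) by apply Rmin_r.
  assert (Ht3 : m < t) by (apply Rmin_glb_lt; lra).
  assert (HEt : E t).
  { split; [lra|]; destruct HEm as [_ HEm].
    specialize (Hl t ltac:(lra)); rewrite Rabs_right in Hl by lra.
    assert (Dp (P m) (P t) <= c * (t - m)) by (apply Hl; lra).
    pose proof (Htri (P u) (P m) (P t)); nra. }
  assert (t <= m) by (apply Hm1; auto); lra.
Qed.

Lemma exp_le a b : a <= b -> exp a <= exp b.
Proof.
  intros [H|H]; [left; apply exp_increasing; exact H | right; rewrite H; reflexivity].
Qed.

(** * Partitions and path length *)

Section PathLength.

Variable D0 : pt -> pt -> R.

Definition partition_sums (P : R -> pt) (a b : R) : R -> Prop :=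
  fun v => exists t k, is_partition a b t k /\ v = partition_sum D0 P t k.

Lemma path_length_sums P a b l :
  path_length D0 P a b l = is_lub (partition_sums P a b) l.
Proof. reflexivity. Qed.

Definition unit_speed (P : R -> pt) (a b : R) : Prop :=
  forall s t, a <= s -> s <= t -> t <= b -> path_length D0 P s t (t - s).

Lemma partition_ge_start a b t k :
  is_partition a b t k -> forall i, (i <= k)%nat -> a <= t i.
Proof.
  intros [H0 [_ Hm]] i; induction i as [|i IH]; intros Hi; [lra|].
  specialize (Hm i ltac:(lia)); specialize (IH ltac:(lia)); lra.
Qed.

Lemma partition_le_end a b t k :
  is_partition a b t k -> forall i, (i <= k)%nat -> t i <= b.
Proof.
  intros [_ [Hk Hm]].
  assert (H : forall m i, (i + m = k)%nat -> t i <= b).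
  { induction m as [|m IH]; intros i Hi; [replace i with k by lia; lra|].
    specialize (IH (S i) ltac:(lia)); specialize (Hm i ltac:(lia)); lra. }
  intros i Hi; apply (H (k - i)%nat); lia.
Qed.

Lemma partition_sum_le_lipschitz P a b t k :
  (forall s u, a <= s -> s <= u -> u <= b -> D0 (P s) (P u) <= u - s) ->
  is_partition a b t k -> partition_sum D0 P t k <= b - a.
Proof.
  intros HL Hp.
  assert (H : forall m, (m <= k)%nat ->
            rsum m (fun i => D0 (P (t i)) (P (t (S i)))) <= t m - t O).
  { induction m as [|m IH]; intros Hm; simpl; [lra|].
    pose proof (partition_ge_start _ _ _ _ Hp m ltac:(lia)).
    pose proof (partition_le_end _ _ _ _ Hp (S m) ltac:(lia)).
    pose proof Hp as [_ [_ Hmon]]; specialize (Hmon m ltac:(lia)).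
    specialize (HL (t m) (t (S m)) ltac:(lra) Hmon ltac:(lra)).
    specialize (IH ltac:(lia)); lra. }
  destruct Hp as [H0 [Hk _]]; specialize (H k (le_n k)).
  unfold partition_sum; rewrite H0, Hk in H; exact H.
Qed.

Lemma unit_speed_lipschitz P a b : unit_speed P a b ->
  forall s t, a <= s -> s <= t -> t <= b -> D0 (P s) (P t) <= t - s.
Proof.
  intros H s t H1 H2 H3; destruct (H s t H1 H2 H3) as [Hub _].
  apply Hub; exists (fun i => match i with O => s | _ => t end), 1%nat; split.
  - repeat split; intros [|i] Hi; simpl; lra || lia.
  - unfold partition_sum; simpl; ring.
Qed.

Lemma is_lub_ext (E F : R -> Prop) l :
  (forall v, E v <-> F v) -> is_lub E l -> is_lub F l.
Proof.
  intros H [H1 H2]; split.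
  - intros v Hv; apply H1, H, Hv.
  - intros b Hb; apply H2; intros v Hv; apply Hb, H, Hv.
Qed.

Lemma path_length_ext P P' s t l :
  (forall u, s <= u <= t -> P u = P' u) ->
  path_length D0 P s t l -> path_length D0 P' s t l.
Proof.
  rewrite !path_length_sums; intros He; apply is_lub_ext.
  intros v; split; intros [tt [k [Hp Hv]]]; exists tt, k; split; auto; rewrite Hv;
    unfold partition_sum; apply rsum_ext; intros i Hi;
    rewrite !He; auto; split;
    (apply (partition_ge_start _ _ _ _ Hp) || apply (partition_le_end _ _ _ _ Hp)); lia.
Qed.

Lemma path_length_shift P s t l c : path_length D0 P s t l ->
  path_length D0 (fun u => P (u - c)) (s + c) (t + c) l.
Proof.
  rewrite !path_length_sums; apply is_lub_ext.
  intros v; split; intros [tt [k [[H0 [Hk Hm]] Hv]]].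
  - exists (fun i => tt i + c), k; split.
    + repeat split; [rewrite H0; ring | rewrite Hk; ring |].
      intros i Hi; specialize (Hm i Hi); lra.
    + rewrite Hv; unfold partition_sum; apply rsum_ext; intros i _.
      replace (tt i + c - c) with (tt i) by ring.
      replace (tt (S i) + c - c) with (tt (S i)) by ring; reflexivity.
  - exists (fun i => tt i - c), k; split; [|exact Hv].
    repeat split; [rewrite H0; ring | rewrite Hk; ring |].
    intros i Hi; specialize (Hm i Hi); lra.
Qed.

Definition concat_partition (p1 p2 : nat -> R) (k1 : nat) : nat -> R :=
  fun i => if Compare_dec.le_lt_dec i k1 then p1 i else p2 (i - k1)%nat.

Lemma concat_partition_spec P s m t p1 k1 p2 k2 :
  is_partition s m p1 k1 -> is_partition m t p2 k2 ->
  is_partition s t (concat_partition p1 p2 k1) (k1 + k2) /\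
  partition_sum D0 P (concat_partition p1 p2 k1) (k1 + k2) =
    partition_sum D0 P p1 k1 + partition_sum D0 P p2 k2.
Proof.
  intros [A0 [Ak Am]] [B0 [Bk Bm]].
  assert (Hq1 : forall j, (j <= k1)%nat -> concat_partition p1 p2 k1 j = p1 j).
  { intros j Hj; unfold concat_partition.
    destruct (Compare_dec.le_lt_dec j k1); auto; lia. }
  assert (Hq2 : forall j, concat_partition p1 p2 k1 (k1 + j)%nat = p2 j).
  { intros j; unfold concat_partition; destruct (Compare_dec.le_lt_dec (k1 + j) k1).
    - replace j with O by lia; rewrite Nat.add_0_r; congruence.
    - f_equal; lia. }
  split; [repeat split|].
  - rewrite Hq1 by lia; exact A0.
  - rewrite Hq2; exact Bk.
  - intros i Hi; destruct (Compare_dec.le_lt_dec (S i) k1).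
    + rewrite !Hq1 by lia; apply Am; lia.
    + replace i with (k1 + (i - k1))%nat by lia.
      replace (S (k1 + (i - k1))) with (k1 + S (i - k1))%nat by lia.
      rewrite !Hq2; apply Bm; lia.
  - unfold partition_sum; rewrite rsum_app; f_equal.
    + apply rsum_ext; intros i Hi; rewrite !Hq1 by lia; reflexivity.
    + apply rsum_ext; intros i Hi.
      replace (S (k1 + i)) with (k1 + S i)%nat by lia; rewrite !Hq2; reflexivity.
Qed.

Hypothesis D0_metric : is_metric D0.

Lemma unit_speed_concat P a m b :
  unit_speed P a m -> unit_speed P m b -> a <= m <= b -> unit_speed P a b.
Proof.
  intros H1 H2 Hm s t Hs Hst Ht.
  destruct (Rle_dec t m) as [Htm|Htm]; [apply H1; lra|].
  destruct (Rle_dec m s) as [Hms|Hms]; [apply H2; lra|].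
  destruct D0_metric as [_ [_ [_ Htri]]].
  assert (Hlip : forall u v, s <= u -> u <= v -> v <= t -> D0 (P u) (P v) <= v - u).
  { intros u v Hu Huv Hv.
    destruct (Rle_dec v m); [apply (unit_speed_lipschitz _ _ _ H1); lra|].
    destruct (Rle_dec m u); [apply (unit_speed_lipschitz _ _ _ H2); lra|].
    pose proof (Htri (P u) (P m) (P v)).
    pose proof (unit_speed_lipschitz _ _ _ H1 u m ltac:(lra) ltac:(lra) ltac:(lra)).
    pose proof (unit_speed_lipschitz _ _ _ H2 m v ltac:(lra) ltac:(lra) ltac:(lra)).
    lra. }
  rewrite path_length_sums; split.
  - intros v [tt [k [Hp ->]]]; apply (partition_sum_le_lipschitz P s t tt k); auto.
  - intros B HB.
    destruct (H1 s m ltac:(lra) ltac:(lra) ltac:(lra)) as [_ Hl1].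
    destruct (H2 m t ltac:(lra) ltac:(lra) ltac:(lra)) as [_ Hl2].
    assert (Hsum : forall p1 k1 p2 k2, is_partition s m p1 k1 -> is_partition m t p2 k2 ->
              partition_sum D0 P p1 k1 + partition_sum D0 P p2 k2 <= B).
    { intros p1 k1 p2 k2 Hp1 Hp2.
      destruct (concat_partition_spec P s m t p1 k1 p2 k2 Hp1 Hp2) as [Hp Hv].
      rewrite <- Hv; apply HB; exists (concat_partition p1 p2 k1), (k1 + k2)%nat; auto. }
    assert (Hfirst : forall p2 k2, is_partition m t p2 k2 ->
              m - s <= B - partition_sum D0 P p2 k2).
    { intros p2 k2 Hp2; apply Hl1; intros v [p1 [k1 [Hp1 ->]]].
      specialize (Hsum p1 k1 p2 k2 Hp1 Hp2); lra. }
    assert (t - m <= B - (m - s)).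
    { apply Hl2; intros v [p2 [k2 [Hp2 ->]]]; specialize (Hfirst p2 k2 Hp2); lra. }
    lra.
Qed.

Lemma partition_sums_rev P T s t v :
  partition_sums (fun u => P (T - u)) s t v -> partition_sums P (T - t) (T - s) v.
Proof.
  destruct D0_metric as [_ [_ [Hsym _]]].
  intros [tt [k [[H0 [Hk Hm]] Hv]]].
  exists (fun i => T - tt (k - i)%nat), k; split.
  - repeat split; [rewrite Nat.sub_0_r, Hk; ring | rewrite Nat.sub_diag, H0; ring |].
    intros i Hi; replace (k - i)%nat with (S (k - S i)) by lia.
    specialize (Hm (k - S i)%nat ltac:(lia)); lra.
  - rewrite Hv; unfold partition_sum; symmetry; rewrite (rsum_rev k).
    apply rsum_ext; intros i Hi.
    replace (k - (k - 1 - i))%nat with (S i) by lia.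
    replace (k - S (k - 1 - i))%nat with i by lia; apply Hsym.
Qed.

Lemma unit_speed_rev P T : unit_speed P 0 T -> unit_speed (fun u => P (T - u)) 0 T.
Proof.
  intros H s t Hs Hst Ht.
  specialize (H (T - t) (T - s) ltac:(lra) ltac:(lra) ltac:(lra)).
  replace (T - s - (T - t)) with (t - s) in H by ring.
  rewrite path_length_sums in *; revert H; apply is_lub_ext.
  intros v; split; intros Hv; [|now apply partition_sums_rev].
  assert (Hinv : (fun u => P (T - (T - u))) = P).
  { apply functional_extensionality; intros u; f_equal; ring. }
  rewrite <- Hinv in Hv; apply (partition_sums_rev (fun w => P (T - w))) in Hv.
  replace (T - (T - s)) with s in Hv by ring; replace (T - (T - t)) with t in Hv by ring.
  exact Hv.
Qed.

End PathLength.

Lemma length_param_of_unit_speed D0 P L :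
  is_metric D0 -> induces_eucl_top D0 -> 0 <= L -> unit_speed D0 P 0 L ->
  length_param D0 P L.
Proof.
  intros [_ [_ [Hsym _]]] [_ HE] HL HU; split; [lra|]; split; [|exact HU].
  intros s Hs eps Heps; destruct (HE (P s) eps Heps) as [d [Hd Hd2]].
  exists d; split; auto; intros t Ht Hts; apply Hd2.
  destruct (Rle_dec s t).
  - pose proof (unit_speed_lipschitz _ _ _ _ HU s t ltac:(lra) r ltac:(lra)).
    rewrite Rabs_right in Hts by lra; lra.
  - pose proof (unit_speed_lipschitz _ _ _ _ HU t s ltac:(lra) ltac:(lra) ltac:(lra)).
    rewrite Rabs_left in Hts by lra; rewrite Hsym; lra.
Qed.

Lemma length_param_restrict D0 P L t :
  length_param D0 P L -> 0 <= t <= L -> length_param D0 P t.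
Proof.
  intros [H0 [Hc Hu]] Ht; split; [lra|]; split.
  - intros s Hs eps Heps; destruct (Hc s ltac:(lra) eps Heps) as [d [Hd Hd2]].
    exists d; split; auto; intros u Hu' Hus; apply Hd2; auto; lra.
  - intros s u H1 H2 H3; apply Hu; lra.
Qed.

Definition path_concat (R1 R2 : R -> pt) (T1 : R) : R -> pt :=
  fun u => if Rle_dec u T1 then R1 u else R2 (u - T1).

Lemma length_param_concat D0 R1 R2 T1 T2 :
  is_metric D0 -> induces_eucl_top D0 ->
  length_param D0 R1 T1 -> length_param D0 R2 T2 -> R1 T1 = R2 0 ->
  length_param D0 (path_concat R1 R2 T1) (T1 + T2).
Proof.
  intros HM HE [H10 [_ HU1]] [H20 [_ HU2]] Hj.
  apply length_param_of_unit_speed; auto; try lra.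
  apply (unit_speed_concat _ HM _ 0 T1); try lra.
  - intros s t Hs Hst Ht; apply (path_length_ext _ R1).
    + intros u Hu; unfold path_concat; destruct Rle_dec; auto; lra.
    + apply HU1; lra.
  - intros s t Hs Hst Ht.
    pose proof (path_length_shift _ _ _ _ _ T1
                  (HU2 (s - T1) (t - T1) ltac:(lra) ltac:(lra) ltac:(lra))) as H.
    replace (s - T1 + T1) with s in H by ring; replace (t - T1 + T1) with t in H by ring.
    replace (t - T1 - (s - T1)) with (t - s) in H by ring.
    revert H; apply path_length_ext.
    intros u Hu; unfold path_concat; destruct Rle_dec; auto.
    replace u with T1 by lra; rewrite Hj; f_equal; ring.
Qed.

Lemma ex_RInt_shift (f : R -> R) a b c :
  ex_RInt f a b -> ex_RInt (fun s => f (s - c)) (a + c) (b + c).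
Proof.
  intros H; apply (ex_RInt_ext (fun s => scal 1 (f (1 * s + - c)))).
  - intros s _; change (scal 1 ?v) with (1 * v); rewrite Rmult_1_l.
    f_equal; ring.
  - apply (ex_RInt_comp_lin (V := R_NormedModule)).
    replace (1 * (a + c) + - c) with a by ring; replace (1 * (b + c) + - c) with b by ring.
    exact H.
Qed.

Lemma RInt_shift (f : R -> R) a b c :
  ex_RInt f a b -> RInt (fun s => f (s - c)) (a + c) (b + c) = RInt f a b.
Proof.
  intros H; transitivity (RInt (fun s => scal 1 (f (1 * s + - c))) (a + c) (b + c)).
  - apply RInt_ext; intros s _; change (scal 1 ?v) with (1 * v); rewrite Rmult_1_l.
    f_equal; ring.
  - rewrite (RInt_comp_lin (V := R_CompleteNormedModule)).
    + f_equal; ring.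
    + replace (1 * (a + c) + - c) with a by ring; replace (1 * (b + c) + - c) with b by ring.
      exact H.
Qed.

Lemma RInt_reflect (f : R -> R) T :
  ex_RInt f 0 T -> RInt (fun s => f (T - s)) 0 T = RInt f 0 T.
Proof.
  intros H.
  assert (Hsub : RInt (fun s => scal (-1) (f (-1 * s + T))) 0 T = RInt f T 0).
  { rewrite (RInt_comp_lin (V := R_CompleteNormedModule)).
    - f_equal; ring.
    - replace (-1 * 0 + T) with T by ring; replace (-1 * T + T) with 0 by ring.
      now apply ex_RInt_swap. }
  assert (Hint : ex_RInt (fun s => f (T - s)) 0 T).
  { apply (ex_RInt_ext (fun s => opp (scal (-1) (f (-1 * s + T))))).
    - intros s _; change (opp (scal (-1) ?v)) with (- (-1 * v)).
      replace (-1 * s + T) with (T - s) by ring.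
      enough (E : - (-1 * f (T - s)) = f (T - s)) by exact E; ring.
    - apply (ex_RInt_opp (V := R_NormedModule)), (ex_RInt_comp_lin (V := R_NormedModule)).
      replace (-1 * 0 + T) with T by ring; replace (-1 * T + T) with 0 by ring.
      now apply ex_RInt_swap. }
  assert (E1 : RInt (fun s => scal (-1) (f (-1 * s + T))) 0 T
               = RInt (fun s => - f (T - s)) 0 T).
  { apply RInt_ext; intros s _; replace (-1 * s + T) with (T - s) by ring.
    enough (E : -1 * f (T - s) = - f (T - s)) by exact E; ring. }
  assert (E2 : RInt (fun s => - f (T - s)) 0 T = - RInt (fun s => f (T - s)) 0 T)
    by exact (RInt_opp (V := R_CompleteNormedModule) _ _ _ Hint).
  assert (E3 : - RInt f 0 T = RInt f T 0)
    by exact (opp_RInt_swap (V := R_CompleteNormedModule) _ _ _ H).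
  lra.
Qed.

Definition weight (xi : R) (g : pt -> R) (P : R -> pt) : R -> R :=
  fun s => exp (xi * g (P s)).

(* Projection onto [0,L], used to extend a path continuously to all of R. *)
Definition clamp (L s : R) : R := Rmax 0 (Rmin L s).

Lemma clamp_lipschitz L s u : 0 <= L -> Rabs (clamp L s - clamp L u) <= Rabs (s - u).
Proof.
  intros HL; unfold clamp, Rmax, Rmin.
  repeat destruct Rle_dec; unfold Rabs; repeat destruct Rcase_abs; lra.
Qed.

Lemma clamp_range L s : 0 <= L -> 0 <= clamp L s <= L.
Proof. intros HL; unfold clamp, Rmax, Rmin; repeat destruct Rle_dec; lra. Qed.

Lemma clamp_id L s : 0 <= s <= L -> clamp L s = s.
Proof. intros H; unfold clamp, Rmax, Rmin; repeat destruct Rle_dec; lra. Qed.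

Lemma weight_integrable xi g D0 P L a b :
  cont2 g -> length_param D0 P L -> 0 <= a -> a <= b -> b <= L ->
  ex_RInt (weight xi g P) a b.
Proof.
  intros Hg [HL [Hc _]] Ha Hab Hb.
  apply (ex_RInt_ext (fun s => exp (xi * g (P (clamp L s))))).
  { intros s Hs; rewrite Rmin_left, Rmax_right in Hs by lra.
    unfold weight; rewrite clamp_id by lra; reflexivity. }
  apply (@ex_RInt_continuous R_CompleteNormedModule); intros s _.
  apply continuity_pt_filterlim.
  assert (Hgc : continuity_pt (fun u => g (P (clamp L u))) s).
  { intros eps Heps; simpl; unfold R_dist.
    destruct (Hg (P (clamp L s)) eps Heps) as [d1 [Hd1 H1]].
    destruct (Hc (clamp L s) (clamp_range L s HL) d1 Hd1) as [d2 [Hd2 H2]].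
    exists d2; split; auto; intros u [_ Hu].
    apply H1, H2; [apply clamp_range; auto|].
    pose proof (clamp_lipschitz L u s HL); simpl in Hu; unfold R_dist in Hu; lra. }
  apply (continuity_pt_comp (fun u => xi * g (P (clamp L u))) exp).
  - apply (continuity_pt_mult (fun _ => xi)); auto; apply continuity_pt_const; now intros.
  - apply derivable_continuous_pt, derivable_pt_exp.
Qed.

Lemma weight_integral_mono xi D0 g P T t :
  cont2 g -> length_param D0 P T -> 0 <= t <= T ->
  RInt (weight xi g P) 0 t <= RInt (weight xi g P) 0 T.
Proof.
  intros Hg HP Ht.
  rewrite <- (RInt_Chasles (weight xi g P) 0 t T);
    [| eapply weight_integrable; eauto; lra | eapply weight_integrable; eauto; lra].
  assert (Htail : 0 <= RInt (weight xi g P) t T).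
  { apply RInt_ge_0; [lra | eapply weight_integrable; eauto; lra |].
    intros; left; apply exp_pos. }
  change (plus ?a ?b) with (a + b); lra.
Qed.

Lemma weight_integral_concat xi D0 g R1 R2 T1 T2 :
  cont2 g -> length_param D0 R1 T1 -> length_param D0 R2 T2 ->
  RInt (weight xi g (path_concat R1 R2 T1)) 0 (T1 + T2) =
  RInt (weight xi g R1) 0 T1 + RInt (weight xi g R2) 0 T2.
Proof.
  intros Hg HP1 HP2; pose proof HP1 as [HT1 _]; pose proof HP2 as [HT2 _].
  assert (Hi1 : ex_RInt (weight xi g R1) 0 T1) by (eapply weight_integrable; eauto; lra).
  assert (Hi2 : ex_RInt (weight xi g R2) 0 T2) by (eapply weight_integrable; eauto; lra).
  assert (Hon1 : forall s, Rmin 0 T1 < s < Rmax 0 T1 ->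
            weight xi g R1 s = weight xi g (path_concat R1 R2 T1) s).
  { intros s Hs; rewrite Rmin_left, Rmax_right in Hs by lra.
    unfold weight, path_concat; destruct Rle_dec; auto; lra. }
  assert (Hon2 : forall s, Rmin (0 + T1) (T2 + T1) < s < Rmax (0 + T1) (T2 + T1) ->
            weight xi g R2 (s - T1) = weight xi g (path_concat R1 R2 T1) s).
  { intros s Hs; rewrite Rmin_left, Rmax_right in Hs by lra.
    unfold weight, path_concat; destruct Rle_dec; auto; lra. }
  assert (E1 : RInt (weight xi g (path_concat R1 R2 T1)) 0 T1 = RInt (weight xi g R1) 0 T1)
    by (symmetry; apply RInt_ext; exact Hon1).
  assert (E2 : RInt (weight xi g (path_concat R1 R2 T1)) (0 + T1) (T2 + T1)
               = RInt (weight xi g R2) 0 T2).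
  { rewrite <- (RInt_shift _ _ _ T1 Hi2); symmetry; apply RInt_ext; exact Hon2. }
  assert (I2 := ex_RInt_ext _ _ _ _ Hon2 (ex_RInt_shift _ _ _ T1 Hi2)).
  rewrite Rplus_0_l in E2, I2; rewrite (Rplus_comm T1 T2).
  rewrite <- (RInt_Chasles _ 0 T1 (T2 + T1) (ex_RInt_ext _ _ _ _ Hon1 Hi1) I2), E1, E2.
  reflexivity.
Qed.

(** * The Weyl-scaled metrics D_g *)

Section WeylMetric.

Variables (xi : R) (D : (pt -> R) -> pt -> pt -> R).
Hypothesis HD : LQG_family xi D.

Lemma weyl_le_integral g P T t :
  cont2 g -> length_param (D zero_fn) P T -> 0 <= t <= T ->
  D g (P 0) (P t) <= RInt (weight xi g P) 0 t.
Proof.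
  intros Hg HP Ht; destruct HD as [_ [_ [_ HW]]].
  apply (proj1 (HW g Hg (P 0) (P t))); exists P, t.
  repeat split; auto; eapply length_param_restrict; eauto.
Qed.

Lemma weyl_near_optimal_path g a b eta :
  cont2 g -> 0 < eta -> exists P T, length_param (D zero_fn) P T /\ P 0 = a /\ P T = b /\
     RInt (weight xi g P) 0 T < D g a b + eta.
Proof.
  intros Hg He; destruct HD as [_ [_ [_ HW]]].
  destruct (glb_approx _ _ (HW g Hg a b) eta He) as [v [[P [T [H1 [H2 [H3 ->]]]]] Hv]].
  exists P, T; auto.
Qed.

Lemma weyl_triangle g a b c : cont2 g -> D g a c <= D g a b + D g b c.
Proof.
  intros Hg; pose proof HD as [HM [HE _]].
  apply le_epsilon; intros eps Heps.
  destruct (weyl_near_optimal_path g a b (eps / 2) Hg ltac:(lra))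
    as [R1 [T1 [HP1 [H1a [H1b H1]]]]].
  destruct (weyl_near_optimal_path g b c (eps / 2) Hg ltac:(lra))
    as [R2 [T2 [HP2 [H2a [H2b H2]]]]].
  pose proof HP1 as [HT1 _]; pose proof HP2 as [HT2 _].
  assert (HPc := length_param_concat _ R1 R2 T1 T2 HM HE HP1 HP2 ltac:(congruence)).
  assert (Hstart : path_concat R1 R2 T1 0 = a).
  { unfold path_concat; destruct Rle_dec; [auto | lra]. }
  assert (Hend : path_concat R1 R2 T1 (T1 + T2) = c).
  { unfold path_concat; destruct Rle_dec.
    - replace (T1 + T2) with T1 by lra; replace T2 with 0 in H2b by lra; congruence.
    - rewrite <- H2b; f_equal; ring. }
  pose proof (weyl_le_integral g _ _ (T1 + T2) Hg HPc ltac:(lra)) as Hle.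
  rewrite Hstart, Hend, (weight_integral_concat xi (D zero_fn) g R1 R2 T1 T2 Hg HP1 HP2) in Hle.
  lra.
Qed.

Lemma weyl_sym_le g a b : cont2 g -> D g b a <= D g a b.
Proof.
  intros Hg; pose proof HD as [HM [HE _]].
  apply le_epsilon; intros eps Heps.
  destruct (weyl_near_optimal_path g a b eps Hg Heps) as [P [T [HP [Ha [Hb HI]]]]].
  pose proof HP as [HT [_ HU]].
  assert (HPr : length_param (D zero_fn) (fun u => P (T - u)) T).
  { apply length_param_of_unit_speed; auto; apply unit_speed_rev; auto. }
  pose proof (weyl_le_integral g _ T T Hg HPr ltac:(lra)) as Hle.
  cbv beta in Hle; rewrite Rminus_0_r, Rminus_eq_0, Ha, Hb in Hle.
  change (weight xi g (fun u => P (T - u))) with (fun s => weight xi g P (T - s)) in Hle.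
  rewrite (RInt_reflect (weight xi g P)) in Hle by (eapply weight_integrable; eauto; lra).
  lra.
Qed.

Lemma weyl_sym g a b : cont2 g -> D g a b = D g b a.
Proof. intros; apply Rle_antisym; apply weyl_sym_le; auto. Qed.

Hypothesis xi_pos : 0 < xi.

Lemma weyl_ge_base g a b : cont2 g -> (forall p, 0 <= g p) -> D zero_fn a b <= D g a b.
Proof.
  intros Hg Hpos; destruct HD as [_ [_ [_ HW]]].
  apply (proj2 (HW g Hg a b)); intros v [P [T [HP [<- [<- ->]]]]].
  pose proof HP as [HT0 [_ HU]].
  pose proof (unit_speed_lipschitz _ _ _ _ HU 0 T ltac:(lra) HT0 ltac:(lra)) as Hlen.
  assert (Hw : RInt (fun _ => 1) 0 T <= RInt (weight xi g P) 0 T).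
  { apply RInt_le; auto; [apply ex_RInt_const | eapply weight_integrable; eauto; lra |].
    intros s _; unfold weight; rewrite <- exp_0.
    apply exp_le, Rmult_le_pos; [left; exact xi_pos | apply Hpos]. }
  rewrite RInt_const in Hw; change (scal ?a ?b) with (a * b) in Hw.
  unfold weight in Hw; lra.
Qed.

Lemma weyl_compare g g' p q r c :
  cont2 g -> cont2 g' -> 0 <= c -> D g p q < r ->
  (forall u, D g p u < r -> exp (xi * g' u) <= c * exp (xi * g u)) ->
  D g' p q <= c * D g p q.
Proof.
  intros Hg Hg' Hc Hr Hb; apply le_epsilon; intros eps Heps.
  set (eta := Rmin (eps / (c + 1)) ((r - D g p q) / 2)).
  assert (Heta : 0 < eta) by (apply Rmin_pos; [apply Rdiv_lt_0_compat|]; lra).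
  assert (Heta1 : eta <= eps / (c + 1)) by apply Rmin_l.
  assert (Heta2 : eta <= (r - D g p q) / 2) by apply Rmin_r.
  destruct (weyl_near_optimal_path g p q eta Hg Heta) as [P [T [HP [H0 [HT HI]]]]].
  pose proof HP as [HT0 _].
  assert (Hint := weight_integrable xi g _ _ _ 0 T Hg HP ltac:(lra) ltac:(lra) ltac:(lra)).
  assert (Hin : forall t, 0 <= t <= T -> D g p (P t) < r).
  { intros t Ht; rewrite <- H0.
    pose proof (weyl_le_integral g P T t Hg HP Ht).
    pose proof (weight_integral_mono xi _ g P T t Hg HP Ht); lra. }
  assert (H1 : D g' p q <= RInt (weight xi g' P) 0 T).
  { rewrite <- H0, <- HT at 1; apply (weyl_le_integral g' P T T Hg' HP); lra. }
  assert (H2 : RInt (weight xi g' P) 0 T <= RInt (fun s => c * weight xi g P s) 0 T).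
  { apply RInt_le; auto; [eapply weight_integrable; eauto; lra | |].
    - exact (ex_RInt_scal (V := R_CompleteNormedModule) _ 0 T c Hint).
    - intros s Hs; apply Hb, Hin; lra. }
  assert (H3 : RInt (fun s => c * weight xi g P s) 0 T = c * RInt (weight xi g P) 0 T)
    by exact (RInt_scal (V := R_CompleteNormedModule) _ 0 T c Hint).
  assert (H4 : c * RInt (weight xi g P) 0 T <= c * (D g p q + eta))
    by (apply Rmult_le_compat_l; lra).
  assert (H5 : c * eta <= eps).
  { apply Rle_trans with ((c + 1) * (eps / (c + 1))); [nra | right; field; lra]. }
  lra.
Qed.

Lemma geodesic_local_compare g g' P a b s c :
  cont2 g -> cont2 g' -> (forall p, 0 <= g p) -> 0 <= c ->
  geodesic (D g) P a b -> 0 <= s <= D g a b ->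
  (exists rho, 0 < rho /\ forall u, edist (P s) u < rho ->
                         exp (xi * g' u) <= c * exp (xi * g u)) ->
  exists d, 0 < d /\ forall s', 0 <= s' <= D g a b -> Rabs (s' - s) < d ->
     D g' (P s) (P s') <= c * Rabs (s' - s).
Proof.
  intros Hg Hg' Hpos Hc [_ [_ Hgeo]] Hs [rho [Hrho Hb]].
  destruct HD as [_ [[_ HE] _]].
  destruct (HE (P s) rho Hrho) as [d [Hd Hd2]].
  exists d; split; auto; intros s' Hs' Hss.
  rewrite <- (Hgeo s s' Hs Hs').
  apply (weyl_compare g g' _ _ d c); auto; [rewrite (Hgeo s s' Hs Hs'); auto|].
  intros u Hu; apply Hb, Hd2.
  pose proof (weyl_ge_base g (P s) u Hg Hpos); lra.
Qed.

Lemma geodesic_compare g g' P a b u v c :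
  cont2 g -> cont2 g' -> (forall p, 0 <= g p) -> 0 <= c ->
  geodesic (D g) P a b -> 0 <= u -> u <= v -> v <= D g a b ->
  (forall s, u <= s <= v -> exists rho, 0 < rho /\
       forall q, edist (P s) q < rho -> exp (xi * g' q) <= c * exp (xi * g q)) ->
  D g' (P u) (P v) <= c * (v - u).
Proof.
  intros Hg Hg' Hpos Hc Hgeo Hu Huv Hv Hloc.
  apply lipschitz_of_local; auto.
  - intros; apply weyl_triangle; auto.
  - intros; apply weyl_sym; auto.
  - intros s Hs.
    destruct (geodesic_local_compare g g' P a b s c Hg Hg' Hpos Hc Hgeo ltac:(lra) (Hloc s Hs))
      as [d [Hd H]].
    exists d; split; auto; intros s' Hs' Hss; apply H; auto; lra.
Qed.

Lemma geodesic_path_cont g P a b :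
  cont2 g -> (forall p, 0 <= g p) -> geodesic (D g) P a b -> path_cont P 0 (D g a b).
Proof.
  intros Hg Hpos [_ [_ Hgeo]] s Hs eps Heps.
  destruct HD as [_ [[_ HE] _]]; destruct (HE (P s) eps Heps) as [d [Hd H]].
  exists d; split; auto; intros t Ht Hts; apply H.
  pose proof (weyl_ge_base g (P s) (P t) Hg Hpos) as Hbase.
  rewrite (Hgeo s t Hs Ht) in Hbase; lra.
Qed.

End WeylMetric.

Lemma cont2_const c : cont2 (fun _ => c).
Proof.
  intros p eps He; exists 1; split; [lra|]; intros.
  rewrite Rminus_eq_0, Rabs_R0; lra.
Qed.

Lemma cont2_plus f g : cont2 f -> cont2 g -> cont2 (fun p => f p + g p).
Proof.
  intros Hf Hg p eps He.
  destruct (Hf p (eps / 2) ltac:(lra)) as [d1 [Hd1 H1]].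
  destruct (Hg p (eps / 2) ltac:(lra)) as [d2 [Hd2 H2]].
  exists (Rmin d1 d2); split; [apply Rmin_pos; lra|]; intros q Hq.
  pose proof (Rmin_l d1 d2); pose proof (Rmin_r d1 d2).
  specialize (H1 q ltac:(lra)); specialize (H2 q ltac:(lra)).
  replace (f q + g q - (f p + g p)) with ((f q - f p) + (g q - g p)) by ring.
  pose proof (Rabs_triang (f q - f p) (g q - g p)); lra.
Qed.

Lemma cont2_scal c f : cont2 f -> cont2 (fun p => c * f p).
Proof.
  intros Hf p eps He; pose proof (Rabs_pos c) as Hc.
  destruct (Hf p (eps / (Rabs c + 1))) as [d [Hd H]]; [apply Rdiv_lt_0_compat; lra|].
  exists d; split; auto; intros q Hq; specialize (H q Hq).
  replace (c * f q - c * f p) with (c * (f q - f p)) by ring; rewrite Rabs_mult.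
  pose proof (Rabs_pos (f q - f p)).
  apply Rle_lt_trans with (Rabs c * (eps / (Rabs c + 1))); [apply Rmult_le_compat_l; lra|].
  apply Rlt_le_trans with ((Rabs c + 1) * (eps / (Rabs c + 1))); [nra | right; field; lra].
Qed.

Lemma cont2_minus f g : cont2 f -> cont2 g -> cont2 (fun p => f p - g p).
Proof.
  intros Hf Hg p eps He.
  destruct (cont2_plus f _ Hf (cont2_scal (-1) g Hg) p eps He) as [d [Hd H]].
  exists d; split; auto; intros q Hq; specialize (H q Hq).
  replace (f q - g q - (f p - g p)) with (f q + -1 * g q - (f p + -1 * g p)) by ring; exact H.
Qed.

Section BumpFields.

Variables (n : nat) (U U' V : nat -> pset) (phi : nat -> pt -> R).
Hypothesis Hsetup : setup n U U' V phi.

Lemma setup_phi i : (i < n)%nat ->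
  cont2 (phi i) /\ (forall p, 0 <= phi i p <= 1) /\
  (forall p, U' i p -> phi i p = 1) /\ (forall p, ~ V i p -> phi i p = 0).
Proof.
  destruct Hsetup as [_ [_ H]]; intros Hi.
  destruct (H i Hi) as [[fx fy Hc _ _ _ _] Hrest]; split; auto.
Qed.

Lemma hfield_cont x : cont2 (hfield n phi x).
Proof.
  unfold hfield.
  assert (H : forall k, (k <= n)%nat -> cont2 (fun u => rsum k (fun i => x i * phi i u))).
  { induction k as [|k IH]; intros Hk; simpl; [apply cont2_const|].
    apply cont2_plus; [apply IH; lia|]; apply cont2_scal, setup_phi; lia. }
  apply H; lia.
Qed.

Lemma hfield_nonneg x : in_cube n x -> forall p, 0 <= hfield n phi x p.
Proof.
  intros Hx p; unfold hfield.
  assert (H : forall k, (k <= n)%nat -> 0 <= rsum k (fun i => x i * phi i p)).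
  { induction k as [|k IH]; intros Hk; simpl; [lra|].
    destruct (setup_phi k ltac:(lia)) as [_ [H01 _]]; specialize (H01 p).
    specialize (Hx k ltac:(lia)); specialize (IH ltac:(lia)); nra. }
  apply H; lia.
Qed.

Lemma hfield_zero x p : (forall j, (j < n)%nat -> ~ V j p) -> hfield n phi x p = 0.
Proof.
  intros H; apply rsum_zero; intros i Hi.
  destruct (setup_phi i Hi) as [_ [_ [_ H0]]]; rewrite H0 by auto; ring.
Qed.

Lemma hfield_single x p i : (i < n)%nat ->
  (forall j, (j < n)%nat -> j <> i -> ~ V j p) -> hfield n phi x p = x i * phi i p.
Proof.
  intros Hi H; apply (rsum_single n (fun i => x i * phi i p) i Hi); intros j Hj Hji.
  destruct (setup_phi j Hj) as [_ [_ [_ H0]]]; rewrite H0 by auto; ring.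
Qed.

Lemma phi_one_closure i p : (i < n)%nat -> closure (U' i) p -> phi i p = 1.
Proof.
  intros Hi Hc; destruct (setup_phi i Hi) as [Hcont [_ [H1 _]]].
  apply NNPP; intros Hne.
  assert (He : 0 < Rabs (1 - phi i p)) by (apply Rabs_pos_lt; lra).
  destruct (Hcont p _ He) as [d [Hd Hd2]].
  destruct (Hc d Hd) as [q [Hq Hpq]]; specialize (Hd2 q Hpq); rewrite H1 in Hd2; auto; lra.
Qed.

End BumpFields.

(** * Elementary planar topology *)

Lemma edist_refl p : edist p p = 0.
Proof.
  unfold edist; replace (fst p - fst p) with 0 by ring.
  replace (snd p - snd p) with 0 by ring; replace (0 ^ 2 + 0 ^ 2) with 0 by ring.
  apply sqrt_0.
Qed.

Lemma closure_sub (A : pset) p : A p -> closure A p.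
Proof. intros H r Hr; exists p; split; auto; rewrite edist_refl; lra. Qed.

Lemma not_closure (A : pset) p :
  ~ closure A p -> exists r, 0 < r /\ forall q, edist p q < r -> ~ A q.
Proof.
  intros H; apply NNPP; intros Hn; apply H; intros r Hr; apply NNPP; intros Hn2.
  apply Hn; exists r; split; auto; intros q Hq HA; apply Hn2; exists q; auto.
Qed.

Lemma not_V_of_not_union n (V : nat -> pset) u :
  ~ union_clV n V u -> forall j, (j < n)%nat -> ~ V j u.
Proof. intros H j Hj HV; apply H; exists j; split; auto; apply closure_sub; auto. Qed.

Lemma open_not_closure_compl (B : pset) p :
  is_open B -> B p -> ~ closure (fun q => ~ B q) p.
Proof.
  intros HB Hp Hc; destruct (HB p Hp) as [r [Hr H]].
  destruct (Hc r Hr) as [q [Hq Hpq]]; exact (Hq (H q Hpq)).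
Qed.

Lemma avoid_finitely_many (Q : nat -> Prop) (A : nat -> pset) n p :
  (forall j, (j < n)%nat -> Q j -> ~ closure (A j) p) ->
  exists r, 0 < r /\ forall q, edist p q < r -> forall j, (j < n)%nat -> Q j -> ~ A j q.
Proof.
  induction n as [|n IH]; intros H.
  - exists 1; split; [lra|]; intros; lia.
  - destruct IH as [r1 [Hr1 H1]]; [intros j Hj HQ; apply H; auto; lia|].
    destruct (classic (Q n)) as [HQ|HQ].
    + destruct (not_closure _ _ (H n ltac:(lia) HQ)) as [r2 [Hr2 H2]].
      exists (Rmin r1 r2); split; [apply Rmin_pos; lra|]; intros q Hq j Hj HQj.
      pose proof (Rmin_l r1 r2); pose proof (Rmin_r r1 r2).
      destruct (Nat.eq_dec j n) as [->|]; [apply H2; lra | apply H1; auto; lra || lia].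
    + exists r1; split; auto; intros q Hq j Hj HQj.
      destruct (Nat.eq_dec j n) as [->|]; [tauto | apply H1; auto; lia].
Qed.

Lemma last_entrance (Q : R -> pt) (S : pset) a b :
  path_cont Q a b -> a <= b -> ~ S (Q a) -> S (Q b) ->
  exists t, a <= t <= b /\ boundary S (Q t) /\ forall s, t < s <= b -> S (Q s).
Proof.
  intros Hc Hab Ha Hb.
  set (E := fun t => a <= t <= b /\ ~ S (Q t)).
  assert (HEb : bound E) by (exists b; intros t [Ht _]; lra).
  destruct (completeness E HEb (ex_intro _ a (conj (conj (Rle_refl a) Hab) Ha)))
    as [m [Hm1 Hm2]].
  assert (Ham : a <= m) by (apply Hm1; split; [lra | auto]).
  assert (Hmb : m <= b) by (apply Hm2; intros t [Ht _]; lra).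
  assert (Hafter : forall s, m < s <= b -> S (Q s)).
  { intros s Hs; apply NNPP; intros HnS.
    assert (s <= m) by (apply Hm1; split; [lra | auto]); lra. }
  exists m; repeat split; auto; intros r Hr; destruct (Hc m ltac:(lra) r Hr) as [d [Hd Hd2]].
  - destruct (Req_dec m b) as [->|Hne]; [exists (Q b); rewrite edist_refl; auto|].
    set (t := Rmin b (m + d / 2)).
    assert (Ht1 : t <= b) by apply Rmin_l; assert (Ht2 : t <= m + d / 2) by apply Rmin_r.
    assert (Ht3 : m < t) by (apply Rmin_glb_lt; lra).
    exists (Q t); split; [apply Hafter; lra | apply Hd2; [lra | rewrite Rabs_right; lra]].
  - destruct (classic (exists t, E t /\ m - d < t)) as [[t [[Ht HnS] Htd]]|Hn].
    + assert (t <= m) by (apply Hm1; split; auto).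
      exists (Q t); split; auto; apply Hd2; [lra | rewrite Rabs_left1; lra].
    + assert (m <= m - d); [|lra].
      apply Hm2; intros t Ht; apply Rnot_lt_le; intros Hlt; apply Hn; exists t; auto.
Qed.

Lemma annulus_crossing (Q : R -> pt) L (A B : pset) ts :
  path_cont Q 0 L -> is_open B -> (forall p, closure A p -> B p) ->
  ~ B (Q 0) -> 0 <= ts <= L -> A (Q ts) ->
  exists t1 t2, 0 <= t1 /\ t1 < t2 /\ t2 <= L /\ boundary B (Q t1) /\
     boundary A (Q t2) /\ forall s, t1 <= s <= t2 -> closure B (Q s).
Proof.
  intros Hc HB HAB HQ0 Hts HAts.
  assert (Hc' : forall t, 0 <= t <= L -> path_cont Q 0 t).
  { intros t Ht s Hs eps Heps; destruct (Hc s ltac:(lra) eps Heps) as [d [Hd H]].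
    exists d; split; auto; intros u Hu; apply H; lra. }
  destruct (last_entrance Q A 0 ts (Hc' ts Hts) ltac:(lra)
              (fun H => HQ0 (HAB _ (closure_sub _ _ H))) HAts)
    as [t2 [Ht2 [HA2 _]]].
  assert (HB2 : B (Q t2)) by (apply HAB, HA2).
  destruct (last_entrance Q B 0 t2 (Hc' t2 ltac:(lra)) ltac:(lra) HQ0 HB2)
    as [t1 [Ht1 [HB1 Hafter]]].
  assert (Hlt : t1 < t2).
  { destruct (Req_dec t1 t2) as [->|]; [|lra].
    exfalso; exact (open_not_closure_compl B _ HB HB2 (proj2 HB1)). }
  exists t1, t2; do 5 (split; [auto; lra|]).
  intros s Hs; destruct (Req_dec s t1) as [->|]; [apply HB1 | apply closure_sub, Hafter; lra].
Qed.

Lemma one_minus_exp_neg_ge a : 0 <= a <= 1 -> a / exp 1 <= 1 - exp (- a).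
Proof.
  intros Ha; pose proof (exp_pos a); pose proof (exp_pos 1).
  assert (Hea : exp a <= exp 1) by (apply exp_le; lra).
  assert (H1a : 1 + a <= exp a) by apply exp_ineq1_le.
  assert (Hinv : exp (- a) * exp a = 1) by (rewrite <- exp_plus, Rplus_opp_l; apply exp_0).
  apply (Rmult_le_reg_r (exp 1)); auto.
  replace (a / exp 1 * exp 1) with a by (field; lra).
  apply Rle_trans with ((1 - exp (- a)) * exp a); [nra|].
  apply Rmult_le_compat_l; [nra | lra].
Qed.

Lemma discount_exceeds xi C eps Delta :
  0 < xi < 1 -> 0 < C -> 0 < eps -> Delta <= 1 -> Delta > 8 * exp 1 * / xi * C * eps ->
  exists eta, 0 < eta /\ 8 * eps < (1 - exp (xi * (- Delta + eta))) * (1 / C).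
Proof.
  intros Hxi HC Heps HD1 HDelta; set (K := 8 * exp 1 * / xi * C * eps) in *.
  assert (HxiK : xi * K = 8 * exp 1 * C * eps) by (unfold K; field; lra).
  pose proof (exp_pos 1) as He.
  assert (Hpos : 0 < 8 * exp 1 * C * eps) by (repeat apply Rmult_lt_0_compat; lra).
  assert (HK : 0 < K) by (apply (Rmult_lt_reg_l xi); lra).
  exists ((Delta - K) / 2); split; [lra|].
  assert (Ha : 8 * exp 1 * C * eps < xi * (Delta - (Delta - K) / 2) <= 1).
  { assert (Hm : 0 < (Delta - K) / 2) by lra.
    pose proof (Rmult_lt_0_compat xi _ (proj1 Hxi) Hm).
    pose proof (Rmult_le_compat_r (Delta - (Delta - K) / 2) xi 1 ltac:(lra) ltac:(lra)).
    assert (Ea : xi * (Delta - (Delta - K) / 2) = xi * K + xi * ((Delta - K) / 2)) by field.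
    lra. }
  replace (xi * (- Delta + (Delta - K) / 2)) with (- (xi * (Delta - (Delta - K) / 2)))
    by field.
  revert Ha; generalize (xi * (Delta - (Delta - K) / 2)) as a; intros a Ha.
  pose proof (one_minus_exp_neg_ge a ltac:(lra)) as Hgap.
  assert (8 * C * eps < 1 - exp (- a)).
  { apply Rlt_le_trans with (a / exp 1); auto.
    apply (Rmult_lt_reg_r (exp 1)); auto; replace (a / exp 1 * exp 1) with a by (field; lra).
    lra. }
  apply (Rmult_lt_reg_r C); auto; replace ((1 - exp (- a)) * (1 / C) * C) with (1 - exp (- a))
    by (field; lra); lra.
Qed.

Section MainArgument.

Variables (xi : R) (D : (pt -> R) -> pt -> pt -> R).
Hypotheses (HD : LQG_family xi D) (xi_pos : 0 < xi).
Variables (n : nat) (U U' V : nat -> pset) (phi : nat -> pt -> R).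
Hypothesis Hsetup : setup n U U' V phi.

(* Dh x is D_{h_x}, the metric of the field h + sum_i x_i phi_i. *)
Local Notation Dh x := (D (hfield n phi x)).

Let h_cont x : cont2 (hfield n phi x) := hfield_cont n U U' V phi Hsetup x.
Let h_nonneg x : in_cube n x -> forall p, 0 <= hfield n phi x p :=
  hfield_nonneg n U U' V phi Hsetup x.

Lemma ball_compare x y z e u :
  (forall u', ~ (Defs.ball (Dh x) z e u' /\ union_clV n V u')) ->
  Dh x z u < e -> Dh y z u <= Dh x z u.
Proof.
  intros Hb Hu; rewrite <- (Rmult_1_l (Dh x z u)).
  apply (weyl_compare xi D HD _ _ z u e 1 (h_cont x) (h_cont y) ltac:(lra) Hu).
  intros u' Hu'; assert (Hn : ~ union_clV n V u') by (intros Hc; apply (Hb u'); split; auto).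
  rewrite !(hfield_zero n U U' V phi Hsetup _ u' (not_V_of_not_union n V u' Hn)); lra.
Qed.

Lemma avoiding_geodesic_compare x y P a b :
  in_cube n x -> geodesic (Dh x) P a b ->
  (forall t, 0 <= t <= Dh x a b -> ~ union_clV n V (P t)) ->
  Dh y a b <= Dh x a b.
Proof.
  intros Hx Hg Hav; pose proof Hg as [H0 [H1 _]].
  assert (HL : 0 <= Dh x a b).
  { pose proof (weyl_ge_base xi D HD xi_pos _ a b (h_cont x) (h_nonneg x Hx)).
    destruct HD as [[HM _] _]; pose proof (HM a b); lra. }
  pose proof (geodesic_compare xi D HD xi_pos _ (hfield n phi y) P a b 0 (Dh x a b) 1
                (h_cont x) (h_cont y) (h_nonneg x Hx) ltac:(lra) Hg ltac:(lra) HL ltac:(lra))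
    as H; rewrite H0, H1 in H.
  apply Rle_trans with (1 * (Dh x a b - 0)); [apply H | lra].
  intros s Hs; destruct (avoid_finitely_many (fun _ => True) V n (P s)) as [rho [Hrho Hr]].
  { intros j Hj _ Hc; apply (Hav s Hs); exists j; auto. }
  exists rho; split; auto; intros q Hq.
  rewrite !(hfield_zero n U U' V phi Hsetup _ q (fun j Hj => Hr q Hq j Hj I)); lra.
Qed.

Lemma detour_bound x y eps z w a1 b1 :
  in_cube n x -> E_event D n U V phi x eps z w ->
  (forall u, ~ (Defs.ball (Dh y) z eps u /\ union_clV n V u)) ->
  (forall u, ~ (Defs.ball (Dh y) w eps u /\ union_clV n V u)) ->
  Dh y z a1 < eps -> Dh y w b1 < eps ->
  Dh y a1 b1 < Dh x a1 b1 + 8 * eps.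
Proof.
  intros Hx [_ [Hzx [Hwx [[P [a0 [b0 [Ha0 [Hb0 [HP HPav]]]]]] _]]]] Hzy Hwy Ha1 Hb1.
  unfold Defs.ball in Ha0, Hb0.
  assert (Hcx := h_cont x).
  assert (Hcy := h_cont y).
  pose proof (ball_compare x y z eps a0 Hzx Ha0).
  pose proof (ball_compare x y w eps b0 Hwx Hb0).
  pose proof (ball_compare y x z eps a1 Hzy Ha1).
  pose proof (ball_compare y x w eps b1 Hwy Hb1).
  pose proof (avoiding_geodesic_compare x y P a0 b0 Hx HP HPav).
  (* a1 -> z -> a0 -> b0 -> w -> b1 for D_{h_y} ... *)
  pose proof (weyl_triangle xi D HD _ a1 z b1 Hcy).
  pose proof (weyl_triangle xi D HD _ z a0 b1 Hcy).
  pose proof (weyl_triangle xi D HD _ a0 b0 b1 Hcy).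
  pose proof (weyl_triangle xi D HD _ b0 w b1 Hcy).
  pose proof (weyl_sym xi D HD _ a1 z Hcy); pose proof (weyl_sym xi D HD _ b0 w Hcy).
  (* ... and a0 -> z -> a1 -> b1 -> w -> b0 for D_{h_x} *)
  pose proof (weyl_triangle xi D HD _ a0 z b0 Hcx).
  pose proof (weyl_triangle xi D HD _ z a1 b0 Hcx).
  pose proof (weyl_triangle xi D HD _ a1 b1 b0 Hcx).
  pose proof (weyl_triangle xi D HD _ b1 w b0 Hcx).
  pose proof (weyl_sym xi D HD _ a0 z Hcx); pose proof (weyl_sym xi D HD _ b1 w Hcx).
  lra.
Qed.

Lemma crossing_duration y C i Q a b ts :
  in_cube n y -> (i < n)%nat -> G_event D n U U' C ->
  geodesic (Dh y) Q a b -> ~ U' i (Q 0) -> 0 <= ts <= Dh y a b -> U i (Q ts) ->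
  exists t1 t2, 0 <= t1 /\ t1 + 1 / C <= t2 /\ t2 <= Dh y a b /\
     forall s, t1 <= s <= t2 -> closure (U' i) (Q s).
Proof.
  intros Hy Hi HG HQ HQ0 Hts HUts.
  assert (Hcy := h_cont y).
  assert (Hny := h_nonneg y Hy).
  pose proof Hsetup as [Hsets _]; destruct (Hsets i Hi) as [_ [HU'o [_ [_ [_ [_ [HUU' _]]]]]]].
  destruct (annulus_crossing Q _ (U i) (U' i) ts
              (geodesic_path_cont xi D HD xi_pos _ Q a b Hcy Hny HQ) HU'o HUU' HQ0 Hts HUts)
    as [t1 [t2 [Ht1 [Ht12 [Ht2 [Hb1 [Hb2 Hcl]]]]]]].
  exists t1, t2; repeat split; auto.
  pose proof (HG i Hi (Q t2) (Q t1) Hb2 Hb1) as Hgap.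
  pose proof (weyl_ge_base xi D HD xi_pos _ (Q t2) (Q t1) Hcy Hny) as Hbase.
  destruct HQ as [_ [_ Hgeo]]; rewrite (Hgeo t2 t1), Rabs_left in Hbase by lra; lra.
Qed.

Lemma weight_le_off_others x y i p :
  (i < n)%nat -> x i <= y i ->
  (forall j, (j < n)%nat -> j <> i -> ~ closure (V j) p) ->
  exists rho, 0 < rho /\ forall q, edist p q < rho ->
    exp (xi * hfield n phi x q) <= 1 * exp (xi * hfield n phi y q).
Proof.
  intros Hi Hxy Hp.
  destruct (avoid_finitely_many (fun j => j <> i) V n p Hp) as [rho [Hrho Hr]].
  exists rho; split; auto; intros q Hq.
  assert (Hnv : forall j, (j < n)%nat -> j <> i -> ~ V j q) by (intros; apply (Hr q Hq); auto).
  rewrite (hfield_single n U U' V phi Hsetup x q i Hi Hnv),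
    (hfield_single n U U' V phi Hsetup y q i Hi Hnv), Rmult_1_l.
  destruct (setup_phi n U U' V phi Hsetup i Hi) as [_ [H01 _]]; specialize (H01 q).
  apply exp_le, Rmult_le_compat_l; [lra | nra].
Qed.

Lemma weight_ratio_on_annulus x y i p eta :
  (i < n)%nat -> 0 < eta ->
  (forall j, (j < n)%nat -> j <> i -> ~ closure (V j) p) -> closure (U' i) p ->
  exists rho, 0 < rho /\ forall q, edist p q < rho ->
    exp (xi * hfield n phi x q) <= exp (xi * (x i - y i + eta)) * exp (xi * hfield n phi y q).
Proof.
  intros Hi Heta Hp Hcl.
  assert (Hnv : forall j, (j < n)%nat -> j <> i -> ~ V j p)
    by (intros j Hj Hji HV; apply (Hp j Hj Hji), closure_sub, HV).
  assert (Hdiff : hfield n phi x p - hfield n phi y p = x i - y i).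
  { rewrite (hfield_single n U U' V phi Hsetup x p i Hi Hnv),
      (hfield_single n U U' V phi Hsetup y p i Hi Hnv), (phi_one_closure n U U' V phi Hsetup i p Hi Hcl); ring. }
  destruct (cont2_minus _ _ (h_cont x) (h_cont y) p eta Heta) as [rho [Hrho Hr]].
  exists rho; split; auto; intros q Hq; specialize (Hr q Hq); rewrite Hdiff in Hr.
  pose proof (Rle_abs (hfield n phi x q - hfield n phi y q - (x i - y i))).
  rewrite <- exp_plus; apply exp_le.
  apply Rle_trans with (xi * ((hfield n phi x q - hfield n phi y q) + hfield n phi y q));
    [right; f_equal; ring|].
  rewrite Rmult_plus_distr_l; apply Rplus_le_compat_r, Rmult_le_compat_l; lra.
Qed.

Lemma geodesic_discount x y i Q a b t1 t2 eta :
  in_cube n y -> (i < n)%nat -> x i <= y i -> 0 < eta ->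
  geodesic (Dh y) Q a b -> 0 <= t1 <= t2 -> t2 <= Dh y a b ->
  (forall t, 0 <= t <= Dh y a b ->
     forall j, (j < n)%nat -> j <> i -> ~ closure (V j) (Q t)) ->
  (forall s, t1 <= s <= t2 -> closure (U' i) (Q s)) ->
  Dh x a b <= Dh y a b - (1 - exp (xi * (x i - y i + eta))) * (t2 - t1).
Proof.
  intros Hy Hi Hxy Heta HQ Ht1 Ht2 Hav Hcl; pose proof HQ as [HQ0 [HQL _]].
  assert (Hcx := h_cont x).
  assert (Hcy := h_cont y).
  assert (Hny := h_nonneg y Hy).
  assert (Hc : 0 <= exp (xi * (x i - y i + eta))) by (left; apply exp_pos).
  assert (Hbefore : Dh x (Q 0) (Q t1) <= 1 * (t1 - 0)).
  { apply (geodesic_compare xi D HD xi_pos (hfield n phi y) (hfield n phi x) Q a b 0 t1 1); auto; try lra.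
    intros s Hs; apply (weight_le_off_others x y i); auto; apply Hav; lra. }
  assert (Hacross : Dh x (Q t1) (Q t2) <= exp (xi * (x i - y i + eta)) * (t2 - t1)).
  { apply (geodesic_compare xi D HD xi_pos (hfield n phi y) (hfield n phi x) Q a b); auto; try lra.
    intros s Hs; apply weight_ratio_on_annulus; auto; apply Hav; lra. }
  assert (Hafter : Dh x (Q t2) (Q (Dh y a b)) <= 1 * (Dh y a b - t2)).
  { apply (geodesic_compare xi D HD xi_pos (hfield n phi y) (hfield n phi x) Q a b t2 (Dh y a b) 1); auto; try lra.
    intros s Hs; apply (weight_le_off_others x y i); auto; apply Hav; lra. }
  rewrite HQ0, HQL in *.
  pose proof (weyl_triangle xi D HD _ a (Q t1) b Hcx).
  pose proof (weyl_triangle xi D HD _ (Q t1) (Q t2) b Hcx).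
  lra.
Qed.

Lemma events_incompatible_oriented C z w eps x y i :
  xi < 1 -> 0 < C -> 0 < eps -> in_cube n x -> in_cube n y -> (i < n)%nat ->
  x i <= y i -> y i - x i > 8 * exp 1 * / xi * C * eps ->
  E_event D n U V phi x eps z w -> E_event D n U V phi y eps z w -> G_event D n U U' C ->
  False.
Proof.
  intros Hxi1 HC Heps Hx Hy Hi Hxy Hgap Ex Ey HG.
  assert (HC' : 0 < 1 / C) by (apply Rdiv_lt_0_compat; lra).
  pose proof Ey as [_ [Hzy [Hwy [_ Eyi]]]].
  destruct (Eyi i Hi) as [Q [a1 [b1 [Ha1 [Hb1 [HQ [[ts [Hts HUts]] HQav]]]]]]].
  unfold Defs.ball in Ha1, Hb1.
  pose proof (detour_bound x y eps z w a1 b1 Hx Ex Hzy Hwy Ha1 Hb1) as Hdetour.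
  assert (HQ0 : ~ U' i (Q 0)).
  { pose proof Hsetup as [Hsets _].
    destruct (Hsets i Hi) as [_ [_ [_ [_ [_ [_ [_ [HU'V _]]]]]]]].
    destruct HQ as [-> _]; intros HU; apply (Hzy a1); split; auto.
    exists i; split; auto; apply closure_sub, HU'V, closure_sub, HU. }
  destruct (crossing_duration y C i Q a1 b1 ts Hy Hi HG HQ HQ0 Hts HUts)
    as [t1 [t2 [Ht1 [Ht12 [Ht2 Hcl]]]]].
  destruct (discount_exceeds xi C eps (y i - x i) ltac:(lra) HC Heps
              ltac:(pose proof (Hx i Hi); pose proof (Hy i Hi); lra) Hgap)
    as [eta [Heta Hsaving]].
  pose proof (geodesic_discount x y i Q a1 b1 t1 t2 eta Hy Hi Hxy Heta HQ
                ltac:(lra) Ht2 HQav Hcl) as Hdiscount.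
  (* D_y(a1,b1) - 8 eps < D_x(a1,b1) <= D_y(a1,b1) - (1 - c)(t2 - t1), while
     (1 - c)(t2 - t1) >= (1 - c) / C > 8 eps. *)
  replace (x i - y i + eta) with (- (y i - x i) + eta) in Hdiscount by ring.
  assert (Hfactor : 0 <= 1 - exp (xi * (- (y i - x i) + eta))).
  { apply Rnot_lt_le; intros Hneg.
    pose proof (Rmult_lt_0_compat _ _ (Ropp_0_gt_lt_contravar _ Hneg) HC'); lra. }
  pose proof (Rmult_le_compat_l _ (1 / C) (t2 - t1) Hfactor ltac:(lra)); lra.
Qed.

End MainArgument.

Theorem lemma4p6 (gamma dgamma : R) (n : nat) (U U' V : nat -> pset)
    (phi : nat -> pt -> R) (D : (pt -> R) -> pt -> pt -> R) :
  0 < gamma < 2 -> 2 < dgamma ->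
  setup n U U' V phi ->
  LQG_family (gamma / dgamma) D ->
  forall (C : R) (z w : pt) (eps : R) (x y : nat -> R),
    1 < C -> 0 < eps < 1 / (100 * C) ->
    in_cube n x -> in_cube n y ->
    (exists i, (i < n)%nat /\
       Rabs (x i - y i) > 8 * exp 1 * / (gamma / dgamma) * C * eps) ->
    E_event D n U V phi x eps z w -> G_event D n U U' C ->
    ~ E_event D n U V phi y eps z w.
Proof.
  intros Hgam Hdg Hs HL C z w eps x y HC Heps Hx Hy [i [Hi Hd]] Ex HG Ey.
  assert (Hxi : 0 < gamma / dgamma) by (apply Rdiv_lt_0_compat; lra).
  assert (Hxi1 : gamma / dgamma < 1).
  { apply (Rmult_lt_reg_r dgamma); [lra|]; unfold Rdiv.
    rewrite Rmult_assoc, Rinv_l, Rmult_1_r, Rmult_1_l by lra; lra. }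
  destruct (Rle_dec (x i) (y i)) as [Hxy|Hxy].
  - rewrite Rabs_left1 in Hd by lra.
    apply (events_incompatible_oriented _ D HL Hxi n U U' V phi Hs C z w eps x y i);
      auto; lra.
  - rewrite Rabs_right in Hd by lra.
    apply (events_incompatible_oriented _ D HL Hxi n U U' V phi Hs C z w eps y x i);
      auto; lra.
Qed.
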